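(* Let $\Psi\in\mathcal P_p$, $m\ge p$ and $q\in\{1,2,\ldots\}$. The density $B\mapsto\mathcal W^{-q}(B\mid\Psi,m)$ on $\mathcal P_p$ has a unique global maximizer, namely $$B^*=\Big(\frac{q}{qm+p+1}\Big)^{1/q}\Psi.$$
   Context: $\mathcal P_p$ is the set of positive definite $p\times p$ real matrices. The power inverse Wishart density is $\mathcal W^{-q}(B\mid\Psi,m)=c_{m,q}^{-1}\exp(-\tfrac12\operatorname{tr}((\Psi^{-1/2}B\Psi^{-1/2})^{-q}))|\Psi|^{qm/2}|B|^{-(qm+p+1)/2}$, where $c_{m,q}\in(0,\infty)$ is a normalizing constant depending only on $m,q,p$ and $\Psi^{1/2}$ is the positive definite square root, $\Psi^{-1/2}=(\Psi^{1/2})^{-1}$. *)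

From Stdlib Require Import Reals Classical ClassicalEpsilon FunctionalExtensionality.
From HB Require Import structures.
From mathcomp Require Import all_boot all_order all_algebra.

Set Implicit Arguments.
Unset Strict Implicit.
Unset Printing Implicit Defensive.

Definition R_eqb (x y : R) : bool := if Req_EM_T x y then true else false.

Lemma R_eqP : Equality.axiom R_eqb.
Proof. move=> x y; rewrite /R_eqb; destruct (Req_EM_T x y) as [h|h]; constructor => //. Qed.

HB.instance Definition _ := hasDecEq.Build R R_eqP.

Definition R_find (P : pred R) (n : nat) : option R :=
  match excluded_middle_informative (exists x, P x) with
  | left h => Some (proj1_sig (constructive_indefinite_description _ h))
  | right _ => None
  end.

Lemma R_find_correct P n x : R_find P n = Some x -> P x.
Proof.
rewrite /R_find; case: excluded_middle_informative => // h [<-].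
exact: proj2_sig (constructive_indefinite_description _ h).
Qed.

Lemma R_find_complete (P : pred R) : (exists x, P x) -> exists n, R_find P n.
Proof.
move=> h; exists 0%N; rewrite /R_find; case: excluded_middle_informative => //.
Qed.

Lemma R_find_ext (P Q : pred R) : P =1 Q -> R_find P =1 R_find Q.
Proof. by move=> /functional_extensionality ->. Qed.

HB.instance Definition _ :=
  hasChoice.Build R R_find_correct R_find_complete R_find_ext.

Lemma R_addA : associative Rplus.
Proof. by move=> x y z; rewrite Rplus_assoc. Qed.
Lemma R_addC : commutative Rplus.
Proof. exact: Rplus_comm. Qed.
Lemma R_add0 : left_id R0 Rplus.
Proof. exact: Rplus_0_l. Qed.
Lemma R_addN : left_inverse R0 Ropp Rplus.
Proof. exact: Rplus_opp_l. Qed.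

HB.instance Definition _ := GRing.isZmodule.Build R R_addA R_addC R_add0 R_addN.

Lemma R_mulA : associative Rmult.
Proof. by move=> x y z; rewrite Rmult_assoc. Qed.
Lemma R_mulC : commutative Rmult.
Proof. exact: Rmult_comm. Qed.
Lemma R_mul1 : left_id R1 Rmult.
Proof. exact: Rmult_1_l. Qed.
Lemma R_mulDl : left_distributive Rmult Rplus.
Proof. move=> x y z; exact: Rmult_plus_distr_r. Qed.
Lemma R_one_neq0 : R1 != R0 :> R.
Proof. by apply/eqP; exact: R1_neq_R0. Qed.

HB.instance Definition _ :=
  GRing.Zmodule_isComNzRing.Build R R_mulA R_mulC R_mul1 R_mulDl R_one_neq0.

Definition R_inv (x : R) : R := if Req_EM_T x R0 then R0 else Rinv x.

Lemma R_mulVf (x : R) : x != R0 -> Rmult (R_inv x) x = R1.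
Proof.
move=> /eqP hx; rewrite /R_inv; destruct (Req_EM_T x R0) as [h|h0].
  by case: hx.
exact: Rinv_l.
Qed.
Lemma R_inv0 : R_inv R0 = R0.
Proof. rewrite /R_inv; destruct (Req_EM_T R0 R0) as [h1|h]; [by [] | by case: h]. Qed.

HB.instance Definition _ := GRing.ComNzRing_isField.Build R R_mulVf R_inv0.

Definition posdef (p : nat) (A : 'M[R]_p) : Prop :=
  trmx A = A /\
  forall x : 'cV[R]_p, x <> (GRing.zero : 'cV[R]_p) ->
    Rlt R0 (mulmx (mulmx (trmx x) A) x ord0 ord0).

Definition sqrtm (p : nat) (Psi : 'M[R]_p) : 'M[R]_p :=
  epsilon (inhabits (GRing.zero : 'M[R]_p)) (fun S : 'M[R]_p => posdef S /\ mulmx S S = Psi).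

Definition isqrtm (p : nat) (Psi : 'M[R]_p) : 'M[R]_p := invmx (sqrtm Psi).

Definition piw_density (p : nat) (c : R) (m : R) (q : nat)
    (Psi B : 'M[R]_p) : R :=
  let X := mulmx (mulmx (isqrtm Psi) B) (isqrtm Psi) in
  Rmult (Rmult (Rmult (Rinv c)
    (exp (Rmult (Ropp (Rinv (INR 2))) (mxtrace (invmx (GRing.exp X q))))))
    (Rpower (determinant Psi) (Rdiv (Rmult (INR q) m) (INR 2))))
    (Rpower (determinant B)
       (Ropp (Rdiv (Rplus (Rplus (Rmult (INR q) m) (INR p)) R1) (INR 2)))).

(* For B positive definite put X = Psi^{-1/2} B Psi^{-1/2}.  X is
   positive definite, so X = Q^T diag(lam) Q with Q orthogonal and all
   lam_i > 0.  Then tr X^{-q} = sum_i lam_i^{-q} and det B = det Psi prod_i lam_i,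
   hence
       W^{-q}(B | Psi, m) = C * exp (sum_i phi(lam_i)),
       phi(y) = - y^{-q} / 2 - (k / 2) ln y,     k = qm + p + 1,
   where C > 0 does not depend on B.  The function phi has the strict global
   maximiser s = (q / k)^{1/q} (a rewriting of 1 + ln u <= u, with equality
   only at u = 1), and B = s Psi exactly when every lam_i equals s. *)

From Pilot Require Import Defs.
From Stdlib Require Import Reals Lra.
From HB Require Import structures.
From mathcomp Require Import all_boot all_order all_algebra.
From mathcomp Require Import boolp classical_sets reals.
From mathcomp Require Rstruct.
Import Order.TTheory GRing.Theory Num.Theory.
Set Implicit Arguments.
Unset Strict Implicit.
Unset Printing Implicit Defensive.

Local Open Scope R_scope.

Lemma eqr_eq (x y : R) : Rstruct.eqr x y = (x == y).
Proof. exact: (sameP (Rstruct.eqrP x y) eqP). Qed.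

(* The two order axioms of Rstruct that mention equality, restated with the
   equality of Defs. *)
Lemma Rleb_def (x y : R) : Rstruct.Rleb x y = (Rabs (y - x) == y - x).
Proof. by rewrite -eqr_eq; exact: Rstruct.Rleb_def. Qed.

Lemma Rltb_def (x y : R) : Rstruct.Rltb x y = (y != x) && Rstruct.Rleb x y.
Proof.
apply/(sameP (Rstruct.RltbP x y))/(iffP andP) => [[/eqP yx /Rstruct.RlebP]|xy].
  by case/Rle_lt_or_eq_dec => // /esym.
by split; [apply/eqP/Rgt_not_eq | apply/Rstruct.RlebP/Rlt_le].
Qed.

HB.instance Definition _ := Num.IntegralDomain_isNumRing.Build R
  Rstruct.Rleb_norm_add Rstruct.addr_Rgtb0 Rstruct.Rnorm0_eq0 Rstruct.Rleb_leVge
  Rstruct.RnormM Rleb_def Rltb_def.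

Lemma RleP (x y : R) : reflect (Rle x y) (x <= y)%R.
Proof. exact: Rstruct.RlebP. Qed.
Lemma RltP (x y : R) : reflect (Rlt x y) (x < y)%R.
Proof. exact: Rstruct.RltbP. Qed.

(* Totality and the archimedean property are proved by Rstruct for the same
   order; their statements do not involve equality, so they apply as they are. *)
HB.instance Definition _ := Order.POrder_isTotal.Build _ R Rstruct.R_total.
HB.instance Definition _ :=
  Num.NumDomain_bounded_isArchimedean.Build R Rstruct.Rarchimedean_axiom.

(* Polynomial functions are continuous; with the intermediate value theorem
   this makes R real closed. *)
Lemma horner_continuity (p : {poly R}) : continuity (fun x => p.[x]%R).
Proof.
rewrite /horner; elim: (polyseq p) => [|a s IHs] /=.
  exact: continuity_const.
apply: (continuity_plus (fun x => horner_rec s x * x)%R (fun=> a)).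
  exact: (continuity_mult _ _ IHs (derivable_continuous _ derivable_id)).
exact: continuity_const.
Qed.

Lemma R_real_closed : Num.real_closed_axiom R.
Proof.
move=> p a b /RleP ab /andP[/RleP pa /RleP pb].
(* The ring 0 of R is Stdlib's 0, up to conversion. *)
have {}pa : p.[a]%R <= 0 := pa.
have {}pb : 0 <= p.[b]%R := pb.
have pab : p.[a]%R * p.[b]%R <= 0 by nra.
have [z [[az zb] pz]] := IVT_cor _ a b (horner_continuity p) ab pab.
by exists z; [apply/andP; split; apply/RleP | apply/rootP].
Qed.

HB.instance Definition _ := Num.RealField_isClosed.Build R R_real_closed.

Local Open Scope classical_set_scope.
Local Open Scope ring_scope.

(* By Stdlib's completeness axiom, the mathcomp supremum of a nonempty set
   bounded above is its least upper bound; this makes R a realType. *)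
Lemma supremum_supremums (E : set R) : has_sup E -> supremums E (supremum 0 E).
Proof.
move=> [[e Ee] [b Eb]].
have [m [ubm lubm]] : {m | is_lub E m}.
  apply: completeness; last by exists e.
  by exists b => x Ex; apply/RleP; exact: Eb.
have Sm : supremums E m.
  split=> [x Ex|c Ec]; apply/RleP; [exact: ubm | apply: lubm => x Ex; apply/RleP; exact: Ec].
rewrite /supremum ifF; last by apply/negbTE/set0P; exists e.
by case: xgetP => [y -> //|no]; case: (no m).
Qed.

Lemma R_sup_adherent (E : set R) (eps : R) : 0 < eps -> has_sup E ->
  exists2 e : R, E e & supremum 0 E - eps < e.
Proof.
move=> eps_gt0 supE; apply: contrapT => noe.
have : ubound E (supremum 0 E - eps).
  by move=> y Ey; rewrite leNgt; apply/negP => lty; apply: noe; exists y.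
move/((supremum_supremums supE).2).
by rewrite -[X in X <= _]subr0 lerD2l lerN2 leNgt eps_gt0.
Qed.

HB.instance Definition _ := ArchimedeanField_isReal.Build R
  (fun E h => (supremum_supremums h).1) R_sup_adherent.

Local Close Scope classical_set_scope.
Local Open Scope R_scope.

(* phi k q y is the contribution of an eigenvalue y of Psi^{-1/2} B Psi^{-1/2}
   to the log-density, where k = qm + p + 1; phi_argmax k q = (q / k)^{1/q}. *)
Definition phi (k : R) (q : nat) (y : R) : R := - (/ 2 * / y ^ q) - k / 2 * ln y.

Definition phi_argmax (k : R) (q : nat) : R := Rpower (INR q / k) (/ INR q).

(* 1 + ln u <= u, strictly unless u = 1 (from exp x >= 1 + x). *)
Lemma ln_le_sub1 (u : R) : 0 < u -> 1 + ln u <= u /\ (u <> 1 -> 1 + ln u < u).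
Proof.
move=> u_gt0; split; first by rewrite -{2}(exp_ln u) //; exact: exp_ineq1_le.
move=> u1; rewrite -{2}(exp_ln u) //; apply: exp_ineq1 => lnu0.
by apply: u1; rewrite -(exp_ln u) // lnu0 exp_0.
Qed.

(* phi_argmax k q is the strict global maximiser of phi k q on (0, +oo): with
   u = s^q / x^q one has phi(s) - phi(x) = k / (2q) * (u - 1 - ln u). *)
Lemma phi_argmax_spec (k : R) (q : nat) (x : R) : (0 < q)%N -> 0 < k -> 0 < x ->
  phi k q x <= phi k q (phi_argmax k q) /\
  (x <> phi_argmax k q -> phi k q x < phi k q (phi_argmax k q)).
Proof.
move=> q_gt0 k_gt0 x_gt0; set s := phi_argmax k q.
have qR_gt0 : 0 < INR q by apply/lt_0_INR/ssrnat.ltP.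
have s_gt0 : 0 < s by apply: exp_pos.
have sq : s ^ q = INR q / k.
  rewrite -Rpower_pow // /s Rpower_mult Rinv_l ?Rpower_1 //; last lra.
  exact: Rdiv_lt_0_compat.
have xq_gt0 : 0 < x ^ q by apply: pow_lt.
have sq_gt0 : 0 < s ^ q by apply: pow_lt.
set u := s ^ q / x ^ q.
have u_gt0 : 0 < u by apply: Rdiv_lt_0_compat.
have lnu : ln u = INR q * ln s - INR q * ln x.
  by rewrite /u /Rdiv ln_mult ?ln_Rinv ?ln_pow //; apply: Rinv_0_lt_compat.
have gap : phi k q s - phi k q x = k / (2 * INR q) * (u - 1 - ln u).
  rewrite lnu /u /phi sq; field; lra.
have c_gt0 : 0 < k / (2 * INR q) by apply: Rdiv_lt_0_compat; lra.
have [le_u lt_u] := ln_le_sub1 u_gt0.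
split.
  have : 0 <= k / (2 * INR q) * (u - 1 - ln u) by apply: Rmult_le_pos; lra.
  lra.
move=> xs; have u1 : u <> 1.
  move=> u1; apply: xs; apply: ln_inv => //.
  have : INR q * ln s - INR q * ln x = 0 by rewrite -lnu u1 ln_1.
  by move=> h; apply: (Rmult_eq_reg_l (INR q)); lra.
have lt_u1 := lt_u u1.
have : 0 < k / (2 * INR q) * (u - 1 - ln u) by apply: Rmult_lt_0_compat; lra.
lra.
Qed.

Lemma sum_phi_lt n (k : R) (q : nat) (lam mu : 'rV[R]_n) : (0 < q)%N -> 0 < k ->
  (forall i, 0 < lam ord0 i) -> (forall i, mu ord0 i = phi_argmax k q) ->
  ~ (forall i, lam ord0 i = phi_argmax k q) ->
  Rlt (\sum_i phi k q (lam ord0 i))%R (\sum_i phi k q (mu ord0 i))%R.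
Proof.
move=> q_gt0 k_gt0 lam_gt0 mu_max not_max.
have [j lamj] : exists j, lam ord0 j <> phi_argmax k q.
  apply: contrapT => no; apply: not_max => i.
  by apply: contrapT => lami; apply: no; exists i.
apply/RltP; rewrite (bigD1 j) //= [X in (_ < X)%R](bigD1 j) //= mu_max.
apply: ltr_leD; first exact/RltP/(phi_argmax_spec q_gt0 k_gt0 (lam_gt0 j)).2.
apply: ler_sum => i _; rewrite mu_max; apply/RleP.
exact: (phi_argmax_spec q_gt0 k_gt0 (lam_gt0 i)).1.
Qed.

Lemma dof_gt0 (p q : nat) (m : R) : INR p <= m -> (0 < q)%N -> 0 < INR q * m + INR p + R1.
Proof.
move=> pm /ssrnat.ltP/lt_0_INR q_gt0; have p_ge0 := pos_INR p.
have : 0 <= INR q * m by apply: Rmult_le_pos; lra.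
lra.
Qed.

Lemma RplusE (x y : R) : Rplus x y = (x + y)%R. Proof. by []. Qed.
Lemma RmultE (x y : R) : Rmult x y = (x * y)%R. Proof. by []. Qed.

Lemma Rpow_exprE (x : R) (n : nat) : (x ^+ n)%R = x ^ n.
Proof. by elim: n => [|n IHn] //; rewrite exprS IHn. Qed.

Lemma Rinv_invr (x : R) : (x^-1)%R = / x.
Proof. by rewrite /GRing.inv /= /R_inv; case: Req_EM_T => [x0|] //=; rewrite x0 Rinv_0. Qed.

Lemma ln_prod n (f : 'I_n -> R) : (forall i, 0 < f i) ->
  0 < \prod_i f i /\ ln (\prod_i f i) = (\sum_i ln (f i))%R.
Proof.
move=> f_gt0; elim/big_rec2: _ => [|i y p _ [p_gt0 lnp]].
  by rewrite ln_1; split; [exact: Rlt_0_1 |].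
by split; [exact: Rmult_lt_0_compat | rewrite ln_mult // lnp].
Qed.

Definition density_scale (c m : R) (q p : nat) (Psi : 'M[R]_p) : R :=
  / c * Rpower (\det Psi) (INR q * m / INR 2) *
  Rpower (\det Psi) (- ((INR q * m + INR p + R1) / INR 2)).

Lemma density_scale_gt0 (c m : R) (q p : nat) (Psi : 'M[R]_p) : 0 < c ->
  0 < density_scale c m q Psi.
Proof.
move=> c_gt0; apply: Rmult_lt_0_compat; last exact: exp_pos.
by apply: Rmult_lt_0_compat; [exact: Rinv_0_lt_compat | exact: exp_pos].
Qed.

Lemma density_spectral p (c m : R) (q : nat) (Psi B : 'M[R]_p) (lam : 'rV[R]_p) :
  0 < \det Psi -> (forall i, 0 < lam ord0 i) ->
  \tr (invmx ((isqrtm Psi *m B *m isqrtm Psi) ^+ q)) = (\sum_i (lam ord0 i ^+ q)^-1)%R ->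
  \det B = (\det Psi * \prod_i lam ord0 i)%R ->
  piw_density c m q Psi B =
    density_scale c m q Psi * exp (\sum_i phi (INR q * m + INR p + R1) q (lam ord0 i))%R.
Proof.
move=> detPsi_gt0 lam_gt0 trE detE.
have [prod_gt0 ln_prodE] := ln_prod lam_gt0.
rewrite /piw_density /density_scale trE detE -Rpower_mult_distr //.
set k := INR q * m + INR p + R1.
rewrite [Rpower (\prod_i _) _]/Rpower ln_prodE.
have -> : (\sum_i phi k q (lam ord0 i))%R =
  - / 2 * (\sum_i (lam ord0 i ^+ q)^-1)%R + - (k / 2) * (\sum_i ln (lam ord0 i))%R.
  rewrite RplusE !RmultE !mulr_sumr -big_split; apply: eq_bigr => i _.
  by rewrite /= -RplusE -!RmultE Rinv_invr Rpow_exprE /phi; lra.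
have two : INR 2 = 2 by rewrite /=; ring.
by rewrite two exp_plus; ring.
Qed.

From mathcomp Require Import functions topology normedtype derive.
From mathcomp Require Import lra.
Import numFieldNormedType.Exports.
Local Open Scope classical_set_scope.
Local Open Scope ring_scope.

Section Spectral.
Variable F : realType.

Definition form n (B : 'M[F]_n) (u v : 'rV[F]_n) : F := (u *m B *m v^T) 0 0.
Definition sqnorm n (v : 'rV[F]_n) : F := form 1%:M v v.

Lemma sqnormE n (v : 'rV[F]_n) : sqnorm v = \sum_j v 0 j ^+ 2.
Proof.
by rewrite /sqnorm /form mulmx1 mxE; apply: eq_bigr => j _; rewrite mxE expr2.
Qed.

Lemma sqnorm_gt0 n (v : 'rV[F]_n) : v != 0 -> 0 < sqnorm v.
Proof.
case/rV0Pn => j vj; rewrite sqnormE (bigD1 j) //=; apply: ltr_pwDl.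
  by rewrite exprn_even_gt0.
by rewrite sumr_ge0 // => i _; rewrite sqr_ge0.
Qed.

Lemma coord_le_sqnorm n (v : 'rV[F]_n) j : v 0 j ^+ 2 <= sqnorm v.
Proof. by rewrite sqnormE (bigD1 j) //= lerDl sumr_ge0 // => i _; rewrite sqr_ge0. Qed.

Lemma formDl n (B : 'M[F]_n) u1 u2 v : form B (u1 + u2) v = form B u1 v + form B u2 v.
Proof. by rewrite /form !mulmxDl mxE. Qed.

Lemma formDr n (B : 'M[F]_n) u v1 v2 : form B u (v1 + v2) = form B u v1 + form B u v2.
Proof. by rewrite /form linearD /= mulmxDr mxE. Qed.

Lemma formZl n (B : 'M[F]_n) a u v : form B (a *: u) v = a * form B u v.
Proof. by rewrite /form -!scalemxAl mxE. Qed.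

Lemma formZr n (B : 'M[F]_n) a u v : form B u (a *: v) = a * form B u v.
Proof. by rewrite /form linearZ /= -scalemxAr mxE. Qed.

Lemma formC n (B : 'M[F]_n) u v : form B u v = form B^T v u.
Proof. by rewrite /form -[in LHS](trmxK (u *m B *m v^T)) mxE !trmx_mul trmxK mulmxA. Qed.

Lemma form_subr n (A : 'M[F]_n) (M : F) u v :
  form (M%:M - A) u v = M * form 1%:M u v - form A u v.
Proof.
by rewrite /form mulmx1 mulmxBr mul_mx_scalar mulmxBl -scalemxAl !mxE.
Qed.

Lemma sqnormZ n a (v : 'rV[F]_n) : sqnorm (a *: v) = a ^+ 2 * sqnorm v.
Proof. by rewrite /sqnorm formZl formZr mulrA expr2. Qed.

Definition normalize n (v : 'rV[F]_n) := (Num.sqrt (sqnorm v))^-1 *: v.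

Lemma sqnorm_normalize n (v : 'rV[F]_n) : v != 0 -> sqnorm (normalize v) = 1.
Proof.
move=> /sqnorm_gt0 v_gt0.
by rewrite sqnormZ exprVn (sqr_sqrtr (ltW v_gt0)) mulVf // gt_eqF.
Qed.

Lemma sum_continuous (T : topologicalType) (I : finType) (f : I -> T -> F) :
  (forall i, continuous (f i)) -> continuous (fun x => \sum_i f i x).
Proof.
move=> fc; rewrite -fct_sumE.
apply: (big_ind (fun g : T -> F => continuous g)) => //.
  exact: cst_continuous.
by move=> g h gc hc x; apply: cvgD; [exact: gc | exact: hc].
Qed.

Lemma form_continuous n (M : 'M[F]_n) : continuous (fun v : 'rV[F]_n => form M v v).
Proof.
have -> : (fun v : 'rV[F]_n => form M v v) =
          (fun v => \sum_j \sum_i v 0 i * M i j * v 0 j).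
  apply/funext => v; rewrite /form mxE; apply: eq_bigr => j _.
  by rewrite !mxE mulr_suml.
apply: (@sum_continuous _ _ (fun j (v : 'rV[F]_n) => \sum_i v 0 i * M i j * v 0 j)) => j.
apply: (@sum_continuous _ _ (fun i (v : 'rV[F]_n) => v 0 i * M i j * v 0 j)) => i v.
apply: (@continuousM _ _ (fun w : 'rV[F]_n => w 0 i * M i j) (fun w => w 0 j)).
  apply: (@continuousM _ _ (fun w : 'rV[F]_n => w 0 i) (fun=> M i j)).
    exact: coord_continuous.
  exact: cst_continuous.
exact: coord_continuous.
Qed.

Lemma form_gram n k (V : 'M[F]_(k, n)) v : form (V^T *m V) v v = sqnorm (v *m V^T).
Proof. by rewrite /sqnorm /form mulmx1 trmx_mul trmxK !mulmxA. Qed.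

Definition constrained_sphere n k (V : 'M[F]_(k, n)) : set 'rV[F]_n :=
  [set v | sqnorm v = 1 /\ v *m V^T = 0].

Lemma constrained_sphere_compact n k (V : 'M[F]_(k, n)) :
  compact (constrained_sphere V).
Proof.
apply: bounded_closed_compact.
  exists 1; split; first exact: num_real.
  move=> M M1 v [v1 _]; rewrite /Num.norm /= mx_normrE.
  apply: bigmax_le => [|[i j] _ /=]; first lra.
  rewrite (ord1 i); apply: le_trans (ltW M1).
  rewrite -(@expr_le1 _ 2) // real_normK ?num_real //.
  by rewrite -v1 coord_le_sqnorm.
have -> : constrained_sphere V =
          (fun v => sqnorm v) @^-1` [set 1] `&` (fun v => form (V^T *m V) v v) @^-1` [set 0].
  apply/seteqP; split => v /= [v1 vV]; split => //.
    by rewrite form_gram vV /sqnorm /form !mul0mx mxE.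
  have [//|/sqnorm_gt0] := eqVneq (v *m V^T) 0.
  by rewrite -form_gram vV ltxx.
by apply: closedI; apply: preimage_closed; rewrite ?/sqnorm;
  do ?[exact: closed_eq | move=> v _; exact: form_continuous].
Qed.

Lemma rayleigh_max n k (A : 'M[F]_n) (V : 'M[F]_(k, n)) : (k < n)%N ->
  exists2 x, constrained_sphere V x &
    forall y, y *m V^T = 0 -> form A y y <= form A x x * sqnorm y.
Proof.
move=> kn.
have [v0 v0V v0nz] : exists2 v0 : 'rV[F]_n, v0 *m V^T = 0 & v0 != 0.
  have /rowV0Pn[v /sub_kermxP vV vnz] : kermx V^T != 0.
    by rewrite -mxrank_eq0 mxrank_ker subn_eq0 -ltnNge (leq_ltn_trans (rank_leq_col _) kn).
  by exists v.
have normalizeV y : y *m V^T = 0 -> y != 0 -> constrained_sphere V (normalize y).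
  by move=> yV ynz; split; [exact: sqnorm_normalize | rewrite -scalemxAl yV scaler0].
have [x /set_mem xS xmax] := EVT_max_rV (ex_intro _ _ (normalizeV _ v0V v0nz))
  (@constrained_sphere_compact n k V) (continuous_subspaceT (@form_continuous n A)).
exists x => // y yV; have [->|ynz] := eqVneq y 0.
  by rewrite /sqnorm /form !mul0mx mxE mulr0.
have := xmax _ (mem_set (normalizeV _ yV ynz)).
have y_gt0 := sqnorm_gt0 ynz.
rewrite /normalize formZl formZr mulrA -expr2 exprVn (sqr_sqrtr (ltW y_gt0)).
by rewrite ler_pdivrMl // mulrC.
Qed.

Lemma psd_form_null n (B : 'M[F]_n) (x y : 'rV[F]_n) : B^T = B ->
  (forall t, 0 <= form B (x + t *: y) (x + t *: y)) -> form B x x = 0 ->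
  form B y x = 0.
Proof.
move=> symB psd x0; set a := form B y x; set b := form B y y.
have quad t : 0 <= 2 * t * a + t ^+ 2 * b.
  have := psd t; rewrite formDl !formDr !formZl !formZr x0 [form B x y]formC symB.
  by rewrite -/a -/b; lra.
have b_ge0 : 0 <= b by have := quad 1; have := quad (-1); lra.
pose w := a / (b + 1).
have aw : a = w * (b + 1) by rewrite /w mulfVK // gt_eqF //; lra.
have := quad (- w); rewrite aw => h.
have -> : w = 0 by nra.
by rewrite mul0r.
Qed.

Lemma eigenvector_orth n k (A : 'M[F]_n) (V : 'M[F]_(k, n)) :
  A^T = A -> (k < n)%N ->
  (forall y : 'rV[F]_n, y *m V^T = 0 -> y *m A *m V^T = 0) ->
  exists (x : 'rV[F]_n) (mu : F), [/\ x *m V^T = 0, sqnorm x = 1 & x *m A = mu *: x].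
Proof.
move=> symA kn AV.
have [x [x1 xV] xmax] := rayleigh_max A V kn.
set mu := form A x x; pose B := mu%:M - A.
have symB : B^T = B by rewrite /B linearB /= tr_scalar_mx symA.
have Bpsd y : y *m V^T = 0 -> 0 <= form B y y.
  by move=> yV; rewrite form_subr subr_ge0; exact: xmax.
have Bx : form B x x = 0 by rewrite form_subr -/(sqnorm x) x1 mulr1 subrr.
have Borth y : y *m V^T = 0 -> form B y x = 0.
  move=> yV; apply: psd_form_null => // t; apply: Bpsd.
  by rewrite mulmxDl -scalemxAl xV yV scaler0 addr0.
pose w := x *m B.
have wV : w *m V^T = 0.
  by rewrite /w /B mulmxBr mul_mx_scalar mulmxBl -scalemxAl xV AV // scaler0 subr0.
have w0 : w = 0.
  have [//|/sqnorm_gt0] := eqVneq w 0.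
  by rewrite -(Borth _ wV) /sqnorm /form /w mulmx1 trmx_mul symB !mulmxA ltxx.
exists x, mu; split => //; apply/eqP; rewrite eq_sym -subr_eq0.
by rewrite -mul_mx_scalar -mulmxBr -/B -/w w0.
Qed.

Lemma mx11_scalar_entry (u : 'M[F]_1) : u = (u 0 0)%:M.
Proof. by apply/matrixP => i j; rewrite !ord1 mxE eqxx mulr1n. Qed.

Lemma orthonormal_eigenvectors n (A : 'M[F]_n) : A^T = A -> forall k, (k <= n)%N ->
  exists (V : 'M[F]_(k, n)) (d : 'rV[F]_k),
    V *m V^T = 1%:M /\ V *m A = diag_mx d *m V.
Proof.
move=> symA; elim => [|k IHk] kn.
  by exists 0, 0; split; apply/matrixP => -[].
have [V [d [VV VA]]] := IHk (ltnW kn).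
have AV (y : 'rV[F]_n) : y *m V^T = 0 -> y *m A *m V^T = 0.
  move=> yV; rewrite -mulmxA -[A *m V^T]trmxK trmx_mul trmxK symA VA.
  by rewrite trmx_mul tr_diag_mx mulmxA yV mul0mx.
have [x [mu [xV x1 xA]]] := eigenvector_orth symA kn AV.
exists (col_mx x V), (row_mx mu%:M d); split.
  change ((col_mx x V) *m (col_mx x V)^T = 1%:M :> 'M[F]_(1 + k)).
  rewrite tr_col_mx mul_col_row VV xV -[V *m x^T]trmxK trmx_mul trmxK xV trmx0.
  have -> : x *m x^T = 1%:M by rewrite [LHS]mx11_scalar_entry -x1 /sqnorm /form mulmx1.
  by rewrite -scalar_mx_block.
change (col_mx x V *m A = diag_mx (row_mx mu%:M d) *m col_mx x V :> 'M[F]_(1 + k, n)).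
rewrite mul_col_mx xA VA diag_mx_row mul_block_col !mul0mx addr0 add0r.
congr col_mx; rewrite -mul_scalar_mx; congr (_ *m _).
by apply/matrixP => i j; rewrite !ord1 !mxE eqxx !mulr1n.
Qed.

Definition orthomx n (Q : 'M[F]_n) := Q *m Q^T = 1%:M.

Theorem spectral_theorem n (A : 'M[F]_n) : A^T = A ->
  exists Q d, orthomx Q /\ A = Q^T *m diag_mx d *m Q.
Proof.
move=> symA; have [Q [d [QQ QA]]] := orthonormal_eigenvectors symA (leqnn n).
by exists Q, d; split => //; rewrite -mulmxA -QA mulmxA (mulmx1C QQ) mul1mx.
Qed.

Lemma orthomxC n (Q : 'M[F]_n) : orthomx Q -> Q^T *m Q = 1%:M.
Proof. exact: mulmx1C. Qed.

Lemma orth_conjM n (Q D E : 'M[F]_n) : orthomx Q ->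
  (Q^T *m D *m Q) *m (Q^T *m E *m Q) = Q^T *m (D *m E) *m Q.
Proof. by move=> QQ; rewrite !mulmxA -[_ *m Q *m Q^T]mulmxA QQ mulmx1. Qed.

Lemma diag_mxX n (d : 'rV[F]_n) k : diag_mx d ^+ k = diag_mx (\row_i d 0 i ^+ k).
Proof.
elim: k => [|k IHk].
  have -> : \row_i d 0 i ^+ 0 = const_mx 1 by apply/rowP => i; rewrite !mxE.
  by rewrite diag_const_mx expr0.
rewrite exprS IHk -mulmxE mulmx_diag; congr diag_mx.
by apply/rowP => i; rewrite !mxE exprS.
Qed.

Lemma spectralX n (Q : 'M[F]_n) (d : 'rV[F]_n) k : orthomx Q ->
  (Q^T *m diag_mx d *m Q) ^+ k = Q^T *m diag_mx (\row_i d 0 i ^+ k) *m Q.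
Proof.
move=> QQ; rewrite -diag_mxX; elim: k => [|k IHk].
  by rewrite !expr0 mulmx1 orthomxC.
by rewrite !exprS IHk -!mulmxE orth_conjM.
Qed.

Lemma spectralV n (Q : 'M[F]_n) (d : 'rV[F]_n) :
  orthomx Q -> (forall i, d 0 i != 0) ->
  invmx (Q^T *m diag_mx d *m Q) = Q^T *m diag_mx (\row_i (d 0 i)^-1) *m Q.
Proof.
move=> QQ d_neq0.
have inv : (Q^T *m diag_mx d *m Q) *m (Q^T *m diag_mx (\row_i (d 0 i)^-1) *m Q) = 1%:M.
  rewrite orth_conjM // mulmx_diag -[RHS](orthomxC QQ) -[in RHS](mulmx1 Q^T).
  rewrite -diag_const_mx; congr (_ *m diag_mx _ *m _).
  by apply/rowP => i; rewrite !mxE mulfV.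
by rewrite -[RHS](mulKmx (mulmx1_unit inv).1) inv mulmx1.
Qed.

Lemma spectral_tr n (Q : 'M[F]_n) (d : 'rV[F]_n) : orthomx Q ->
  \tr (Q^T *m diag_mx d *m Q) = \sum_i d 0 i.
Proof. by move=> QQ; rewrite mxtrace_mulC mulmxA QQ mul1mx mxtrace_diag. Qed.

Lemma spectral_det n (Q : 'M[F]_n) (d : 'rV[F]_n) : orthomx Q ->
  \det (Q^T *m diag_mx d *m Q) = \prod_i d 0 i.
Proof.
by move=> QQ; rewrite !det_mulmx det_diag mulrAC -det_mulmx orthomxC // det1 mul1r.
Qed.

Lemma spectral_scalar n (Q : 'M[F]_n) (d : 'rV[F]_n) (s : F) : orthomx Q ->
  Q^T *m diag_mx d *m Q = s%:M <-> forall i, d 0 i = s.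
Proof.
move=> QQ; split => [Ds i|ds].
  have : diag_mx d = Q *m s%:M *m Q^T by rewrite -Ds !mulmxA QQ mul1mx -mulmxA QQ mulmx1.
  rewrite mul_mx_scalar -scalemxAl QQ => /matrixP/(_ i i).
  by rewrite !mxE eqxx mulr1n mulr1.
have -> : d = const_mx s by apply/rowP => i; rewrite mxE ds.
by rewrite diag_const_mx mul_mx_scalar -scalemxAl orthomxC // scalemx1.
Qed.

Definition pdmx n (A : 'M[F]_n) :=
  A^T = A /\ forall x : 'cV[F]_n, x != 0 -> 0 < (x^T *m A *m x) 0 0.

Lemma spectral_quad n (Q : 'M[F]_n) (d : 'rV[F]_n) (x : 'cV[F]_n) :
  (x^T *m (Q^T *m diag_mx d *m Q) *m x) 0 0 = \sum_i d 0 i * (Q *m x) i 0 ^+ 2.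
Proof.
have -> : x^T *m (Q^T *m diag_mx d *m Q) *m x = (Q *m x)^T *m diag_mx d *m (Q *m x).
  by rewrite trmx_mul !mulmxA.
set y := Q *m x; rewrite mxE; apply: eq_bigr => i _.
by rewrite mul_mx_diag mxE [y^T 0 i]mxE mulrAC -expr2 mulrC.
Qed.

Lemma pdmx_spectralP n (Q : 'M[F]_n) (d : 'rV[F]_n) : orthomx Q ->
  pdmx (Q^T *m diag_mx d *m Q) <-> forall i, 0 < d 0 i.
Proof.
move=> QQ; split => [[_ pd] i|d_gt0].
  pose e : 'cV[F]_n := delta_mx i 0.
  have QQe : Q *m (Q^T *m e) = e by rewrite mulmxA QQ mul1mx.
  have e0 : e != 0.
    by apply/negP => /eqP/matrixP/(_ i 0); rewrite !mxE !eqxx => /eqP; rewrite oner_eq0.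
  have Qe0 : Q^T *m e != 0 by apply: contra_neq e0 => Qe0; rewrite -QQe Qe0 mulmx0.
  have := pd _ Qe0; rewrite spectral_quad QQe (bigD1 i) //= big1 => [|j /negbTE ji].
    by rewrite addr0 mxE !eqxx expr1n mulr1.
  by rewrite mxE ji /= expr0n mulr0.
split=> [|x x0]; first by rewrite !trmx_mul trmxK tr_diag_mx mulmxA.
have /matrix0Pn[i [j Qxi]] : Q *m x != 0.
  by apply: contra_neq x0 => Qx0; rewrite -[x]mul1mx -(orthomxC QQ) -mulmxA Qx0 mulmx0.
rewrite (ord1 j) in Qxi; rewrite spectral_quad (bigD1 i) //=; apply: ltr_pwDl.
  by rewrite mulr_gt0 // exprn_even_gt0.
by rewrite sumr_ge0 // => k _; rewrite mulr_ge0 ?sqr_ge0 // ltW.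
Qed.

Lemma pdmx_spectral n (A : 'M[F]_n) : pdmx A ->
  exists Q d, [/\ orthomx Q, A = Q^T *m diag_mx d *m Q & forall i, 0 < d 0 i].
Proof.
move=> pA; have [Q [d [QQ AE]]] := spectral_theorem pA.1.
by exists Q, d; split => //; apply/(pdmx_spectralP d QQ); rewrite -AE.
Qed.

Lemma pdmx_sqrt n (A : 'M[F]_n) : pdmx A -> exists S, pdmx S /\ S *m S = A.
Proof.
case/pdmx_spectral => Q [d [QQ -> d_gt0]].
exists (Q^T *m diag_mx (\row_i Num.sqrt (d 0 i)) *m Q); split.
  by apply/pdmx_spectralP => // i; rewrite mxE sqrtr_gt0.
rewrite orth_conjM // mulmx_diag; congr (_ *m diag_mx _ *m _).
by apply/rowP => i; rewrite !mxE -expr2 sqr_sqrtr // ltW.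
Qed.

Lemma pdmx_unit n (A : 'M[F]_n) : pdmx A -> A \in unitmx.
Proof.
case/pdmx_spectral => Q [d [QQ -> d_gt0]].
by rewrite unitmxE spectral_det // unitfE; apply/prodf_neq0 => i _; rewrite gt_eqF.
Qed.

Lemma pdmx_congr n (B T : 'M[F]_n) : pdmx B -> T^T = T -> T \in unitmx ->
  pdmx (T *m B *m T).
Proof.
move=> [symB pB] symT uT; split; first by rewrite !trmx_mul symT symB mulmxA.
move=> x x0.
have -> : x^T *m (T *m B *m T) *m x = (T *m x)^T *m B *m (T *m x).
  by rewrite trmx_mul symT !mulmxA.
by apply: pB; apply: contra_neq x0 => Tx0; rewrite -(mulKmx uT x) Tx0 mulmx0.
Qed.

Lemma pdmx_scale n (A : 'M[F]_n) s : 0 < s -> pdmx A -> pdmx (s *: A).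
Proof.
move=> s_gt0 [symA pA]; split=> [|x x0]; first by rewrite linearZ /= symA.
by rewrite -scalemxAr -scalemxAl mxE mulr_gt0 // pA.
Qed.

Lemma pdmx_det_gt0 n (A : 'M[F]_n) : pdmx A -> 0 < \det A.
Proof. by case/pdmx_spectral => Q [d [QQ -> d_gt0]]; rewrite spectral_det // prodr_gt0. Qed.

End Spectral.

Lemma posdef_pdmx n (A : 'M[R]_n) : posdef A <-> pdmx A.
Proof.
split=> -[symA pA]; split=> // x x0; apply/RltP; apply: pA.
  by move=> x0'; rewrite x0' eqxx in x0.
exact/eqP.
Qed.

Lemma sqrtm_spec n (Psi : 'M[R]_n) : pdmx Psi ->
  pdmx (sqrtm Psi) /\ sqrtm Psi *m sqrtm Psi = Psi.
Proof.
move=> /pdmx_sqrt[S [pS SS]].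
have : posdef (sqrtm Psi) /\ sqrtm Psi *m sqrtm Psi = Psi.
  apply: (ClassicalEpsilon.epsilon_spec (inhabits 0) (fun S => posdef S /\ S *m S = Psi)).
  by exists S; split => //; exact/posdef_pdmx.
by case=> /posdef_pdmx.
Qed.

Lemma whitened_spectrum n (q : nat) (Psi B : 'M[R]_n) : pdmx Psi -> pdmx B ->
  exists lam : 'rV[R]_n, [/\ forall i, 0 < lam 0 i,
    \tr (invmx ((isqrtm Psi *m B *m isqrtm Psi) ^+ q)) = \sum_i (lam 0 i ^+ q)^-1,
    \det B = \det Psi * \prod_i lam 0 i &
    forall s, (forall i, lam 0 i = s) <-> B = s *: Psi].
Proof.
move=> pPsi pB; have [pS SS] := sqrtm_spec pPsi.
rewrite /isqrtm; set S := sqrtm Psi in pS SS *; set T := invmx S.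
have uS : S \in unitmx := pdmx_unit pS.
have symT : T^T = T by rewrite trmx_inv pS.1.
have pX : pdmx (T *m B *m T) by apply: pdmx_congr; rewrite ?unitmx_inv.
have [Q [lam [QQ XE lam_gt0]]] := pdmx_spectral pX.
have BE : B = S *m (T *m B *m T) *m S.
  by rewrite !mulmxA mulmxV // mul1mx -mulmxA mulVmx // mulmx1.
have scalarE s : B = s *: Psi <-> T *m B *m T = s%:M.
  split=> [->|X_s]; last by rewrite BE X_s mul_mx_scalar -scalemxAl SS.
  by rewrite -SS -scalemxAr -scalemxAl !mulmxA mulVmx // mul1mx mulmxV // scalemx1.
exists lam; split => //.
- rewrite XE spectralX // spectralV ?spectral_tr //; last first.
    by move=> i; rewrite mxE expf_neq0 // gt_eqF.
  by apply: eq_bigr => i _; rewrite !mxE.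
- by rewrite {1}BE XE det_mulmx [\det (S *m _)]det_mulmx spectral_det // -SS det_mulmx mulrAC.
- by move=> s; rewrite scalarE XE; exact: iff_sym (spectral_scalar lam s QQ).
Qed.

Theorem mainTheorem3 (p : nat) (Psi : 'M[R]_p) (m : R) (q : nat) (c : R) :
  posdef Psi -> Rle (INR p) m -> (0 < q)%N -> Rlt R0 c ->
  let Bstar : 'M[R]_p :=
    GRing.scale
      (Rpower (Rdiv (INR q) (Rplus (Rplus (Rmult (INR q) m) (INR p)) R1))
              (Rinv (INR q)))
      Psi in
  posdef Bstar /\
  (forall B : 'M[R]_p, posdef B -> B <> Bstar ->
     Rlt (piw_density c m q Psi B) (piw_density c m q Psi Bstar)).
Proof.
move=> /posdef_pdmx pPsi pm q_gt0 c_gt0 Bstar.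
set k := Rplus (Rplus (Rmult (INR q) m) (INR p)) R1.
have k_gt0 : Rlt 0 k := dof_gt0 pm q_gt0.
have pBstar : pdmx Bstar by apply: pdmx_scale pPsi; apply/RltP/exp_pos.
split; first exact/posdef_pdmx.
move=> B /posdef_pdmx pB B_neq.
have [lB [lB_gt0 trB detB scalB]] := whitened_spectrum q pPsi pB.
have [lS [lS_gt0 trS detS scalS]] := whitened_spectrum q pPsi pBstar.
have detPsi_gt0 : Rlt 0 (\det Psi) by apply/RltP/pdmx_det_gt0.
have Rpos (lam : 'rV[R]_p) i : 0 < lam 0 i -> Rlt 0 (lam 0 i) by move/RltP.
rewrite (density_spectral c m detPsi_gt0 (fun i => Rpos _ _ (lB_gt0 i)) trB detB).
rewrite (density_spectral c m detPsi_gt0 (fun i => Rpos _ _ (lS_gt0 i)) trS detS).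
apply: Rmult_lt_compat_l; first exact: density_scale_gt0.
apply: exp_increasing; apply: sum_phi_lt => // [i|i|lB_max].
- exact: Rpos.
- exact: (scalS (phi_argmax k q)).2.
- by apply: B_neq; apply/scalB.
Qed.
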